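(* Let $f(x)=x^5+px^4+qx^3+rx^2+sx+t$ with real coefficients, and suppose $D=0$, $L_1=0$, $L_2\neq0$ and $D_2>0$ (so $f$ has two distinct real double roots and one real simple root). Then the simple root of $f$ is $C_3/L_2$, the two double roots are the roots of $L_2x^2-2C_{2,1}x+C_{2,0}$, and with $F_4=\dfrac{C_3^2}{L_2^2}+\dfrac{C_{2,0}}{L_2}-\dfrac{2C_3C_{2,1}}{L_2^2}$, $F_5=\dfrac{2C_3-2C_{2,1}}{L_2}$: (a) if $F_4>0$ and $F_5<0$: single $<$ double $<$ double; (b) if $F_4<0$: double $<$ single $<$ double; (c) if $F_4>0$ and $F_5>0$: double $<$ double $<$ single.
   Context: Let $\alpha_1,\dots,\alpha_5\in\mathbb{C}$ be the roots of $f$ listed with multiplicity. $D=\prod_{1\le i<j\le 5}(\alpha_i-\alpha_j)^2$ is the discriminant of $f$. $L_2=40qs-16p^2s-8rp^3+38rpq+3p^2q^2-12q^3-45r^2$. $L_1=-264ps^2r-12p^3tq^2+36r^3pq-124srpq^2+28srp^3q+260sptq-132p^2qrt+240pr^2t+234sqr^2+32p^4tr+48ptq^3-56sp^3t-80q^2rt+194qs^2p^2-600str-6q^3sp^2+2p^2q^2r^2-12sr^2p^2-54r^4+320s^3-8q^3r^2-8r^3p^3+250qt^2-176q^2s^2+24q^4s-36p^4s^2-100p^2t^2$. $D_2=24p^2q^4s-1100q^3rt+800p^3qst-1735p^2q^2rt-3p^2qr^2s+20pq^3rs-600p^2rst-1150pq^2st+5475pqr^2t-1380pqrs^2+1500qrst+6p^3qr^3+p^4q^2r^2-128p^6rt+660pq^4t-136p^5st-3p^4q^3s-236p^4qs^2+337p^2q^2s^2+48p^5q^2t-357p^3q^3t-12p^4r^2s-45pr^3s+60q^2r^2s-8p^2q^3r^2-500p^2qt^2-24pq^2r^3-1380p^3r^2t+408p^3rs^2-4p^5qrs+1028p^4qrt+11p^3q^2rs+36p^6s^2+100p^4t^2+9p^2r^4-48q^5s+16q^4r^2+160q^3s^2+625q^2t^2-3375r^3t+900r^2s^2$.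 $C_{2,1}=6sp^3+4q^2r-3pr^2-21spq+30sr+10p^2t-25tq-p^2rq$. $C_{2,0}=-16tp^3-75tr+3psr-4q^2s+55tpq+p^2sq$. $C_3=-34p^2rq+8rp^4+44spq-3p^3q^2-8sp^3+12pq^3+57pr^2-16q^2r+100tq-120sr-40p^2t$. *)

From HB Require Import structures.
From mathcomp Require Import all_boot all_order all_algebra.
Set Implicit Arguments. Unset Strict Implicit. Unset Printing Implicit Defensive.
Import Order.TTheory GRing.Theory Num.Theory.
Local Open Scope ring_scope.

Definition quintic {R : nzRingType} (p q r s t : R) : {poly R} :=
  'X^5 + p *: 'X^4 + q *: 'X^3 + r *: 'X^2 + s *: 'X + t%:P.

Definition discr_roots {R : nzRingType} (alpha : 'I_5 -> R) : R :=
  \prod_(i < 5) \prod_(j < 5 | (i < j)%N) (alpha i - alpha j) ^+ 2.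

Section Polys.
Context {R : nzRingType}.
Definition L2 (p q r s t : R) : R :=
  40 * q * s - 16 * p ^+ 2 * s - 8 * r * p ^+ 3 + 38 * r * p * q + 3 * p ^+ 2 * q ^+ 2 - 12 * q ^+ 3 - 45 * r ^+ 2.

Definition L1 (p q r s t : R) : R :=
  - 264 * p * s ^+ 2 * r - 12 * p ^+ 3 * t * q ^+ 2 + 36 * r ^+ 3 * p * q - 124 * s * r * p * q ^+ 2 + 28 * s * r * p ^+ 3 * q + 260 * s * p * t * q - 132 * p ^+ 2 * q * r * t + 240 * p * r ^+ 2 * t + 234 * s * q * r ^+ 2 + 32 * p ^+ 4 * t * r + 48 * p * t * q ^+ 3 - 56 * s * p ^+ 3 * t - 80 * q ^+ 2 * r * t + 194 * q * s ^+ 2 * p ^+ 2 - 600 * s * t * r - 6 * q ^+ 3 * s * p ^+ 2 + 2 * p ^+ 2 * q ^+ 2 * r ^+ 2 - 12 * s * r ^+ 2 * p ^+ 2 - 54 * r ^+ 4 + 320 * s ^+ 3 - 8 * q ^+ 3 * r ^+ 2 - 8 * r ^+ 3 * p ^+ 3 + 250 * q * t ^+ 2 - 176 * q ^+ 2 * s ^+ 2 + 24 * q ^+ 4 * s - 36 * p ^+ 4 * s ^+ 2 - 100 * p ^+ 2 * t ^+ 2.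

Definition D2 (p q r s t : R) : R :=
  24 * p ^+ 2 * q ^+ 4 * s - 1100 * q ^+ 3 * r * t + 800 * p ^+ 3 * q * s * t - 1735 * p ^+ 2 * q ^+ 2 * r * t - 3 * p ^+ 2 * q * r ^+ 2 * s + 20 * p * q ^+ 3 * r * s - 600 * p ^+ 2 * r * s * t - 1150 * p * q ^+ 2 * s * t + 5475 * p * q * r ^+ 2 * t - 1380 * p * q * r * s ^+ 2 + 1500 * q * r * s * t + 6 * p ^+ 3 * q * r ^+ 3 + p ^+ 4 * q ^+ 2 * r ^+ 2 - 128 * p ^+ 6 * r * t + 660 * p * q ^+ 4 * t - 136 * p ^+ 5 * s * t - 3 * p ^+ 4 * q ^+ 3 * s - 236 * p ^+ 4 * q * s ^+ 2 + 337 * p ^+ 2 * q ^+ 2 * s ^+ 2 + 48 * p ^+ 5 * q ^+ 2 * t - 357 * p ^+ 3 * q ^+ 3 * t - 12 * p ^+ 4 * r ^+ 2 * s - 45 * p * r ^+ 3 * s + 60 * q ^+ 2 * r ^+ 2 * s - 8 * p ^+ 2 * q ^+ 3 * r ^+ 2 - 500 * p ^+ 2 * q * t ^+ 2 - 24 * p * q ^+ 2 * r ^+ 3 - 1380 * p ^+ 3 * r ^+ 2 * t + 408 * p ^+ 3 * r * s ^+ 2 - 4 * p ^+ 5 * q * r * s + 1028 * p ^+ 4 * q * r * t + 11 * p ^+ 3 * q ^+ 2 * r * s + 36 * p ^+ 6 * s ^+ 2 + 100 * p ^+ 4 * t ^+ 2 + 9 * p ^+ 2 * r ^+ 4 - 48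 * q ^+ 5 * s + 16 * q ^+ 4 * r ^+ 2 + 160 * q ^+ 3 * s ^+ 2 + 625 * q ^+ 2 * t ^+ 2 - 3375 * r ^+ 3 * t + 900 * r ^+ 2 * s ^+ 2.

Definition C21 (p q r s t : R) : R :=
  6 * s * p ^+ 3 + 4 * q ^+ 2 * r - 3 * p * r ^+ 2 - 21 * s * p * q + 30 * s * r + 10 * p ^+ 2 * t - 25 * t * q - p ^+ 2 * r * q.

Definition C20 (p q r s t : R) : R :=
  - 16 * t * p ^+ 3 - 75 * t * r + 3 * p * s * r - 4 * q ^+ 2 * s + 55 * t * p * q + p ^+ 2 * s * q.

Definition C3 (p q r s t : R) : R :=
  - 34 * p ^+ 2 * r * q + 8 * r * p ^+ 4 + 44 * s * p * q - 3 * p ^+ 3 * q ^+ 2 - 8 * s * p ^+ 3 + 12 * p * q ^+ 3 + 57 * p * r ^+ 2 - 16 * q ^+ 2 * r + 100 * t * q - 120 * s * r - 40 * p ^+ 2 * t.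

End Polys.

From HB Require Import structures.
From mathcomp Require Import all_boot all_order all_algebra.
From mathcomp Require Import ring.
Import Order.TTheory GRing.Theory Num.Theory.
Local Open Scope ring_scope.
Set Implicit Arguments.
Unset Strict Implicit.

(* Vieta expresses the invariants through the roots, and at each relevant root
   configuration they factor.  If f = (X-u)^2 (X-v) (X-w) (X-x), then L1 is twice
   the squared product of the pairwise differences of u, v, w, x, so L1 = 0 forces
   a second coincidence; D2 vanishes as soon as a root is triple, so D2 <> 0 leaves two
   double roots a, b and a simple root y.  There L2 = 4 ((a-b)(a-y)(b-y))^2,
   C3 = y L2, 2 C21 = (a+b) L2, C20 = a b L2 and 4 D2 = L2^2 (a-b)^2.  Hence y and
   a + b are real, (a-b)^2 = 4 D2 / L2^2 > 0 makes a - b real, and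
   F4 = (y-a)(y-b), F5 = 2y - (a+b) locate y with respect to a < b. *)

Section RootIdentities.
Context {R : comNzRingType}.
Implicit Types p q r s t u v w x y : R.

Lemma quintic_coef p q r s t :
  [/\ (quintic p q r s t)`_4 = p, (quintic p q r s t)`_3 = q,
      (quintic p q r s t)`_2 = r, (quintic p q r s t)`_1 = s
    & (quintic p q r s t)`_0 = t].
Proof.
rewrite /quintic !coefD !coefZ !coefXn !coefX !coefC /=.
by split; rewrite ?mulr0 ?mulr1 ?addr0 ?add0r.
Qed.

Lemma quintic_inj p q r s t p' q' r' s' t' :
  quintic p q r s t = quintic p' q' r' s' t' ->
  [/\ p = p', q = q', r = r', s = s' & t = t'].
Proof.
move=> E; have [a4 a3 a2 a1 a0] := quintic_coef p q r s t.
have [b4 b3 b2 b1 b0] := quintic_coef p' q' r' s' t'.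
by move: a4 a3 a2 a1 a0; rewrite E b4 b3 b2 b1 b0 => <- <- <- <- <-.
Qed.

Lemma prodXsubC5 u v w x y :
  ('X - u%:P) * ('X - v%:P) * ('X - w%:P) * ('X - x%:P) * ('X - y%:P) =
  quintic (- (u + v + w + x + y))
    (u * v + u * w + u * x + u * y + v * w + v * x + v * y + w * x + w * y + x * y)
    (- (u * v * w + u * v * x + u * v * y + u * w * x + u * w * y + u * x * y
        + v * w * x + v * w * y + v * x * y + w * x * y))
    (u * v * w * x + u * v * w * y + u * v * x * y + u * w * x * y + v * w * x * y)
    (- (u * v * w * x * y)).
Proof. by rewrite /quintic -!mul_polyC !(polyCN, polyCD, polyCM); ring. Qed.

Lemma quintic_vieta p q r s t u v w x y :
  quintic p q r s t = ('X - u%:P) * ('X - v%:P) * ('X - w%:P) * ('X - x%:P) * ('X - y%:P) ->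
  [/\ p = - (u + v + w + x + y),
      q = u * v + u * w + u * x + u * y + v * w + v * x + v * y + w * x + w * y + x * y,
      r = - (u * v * w + u * v * x + u * v * y + u * w * x + u * w * y + u * x * y
             + v * w * x + v * w * y + v * x * y + w * x * y),
      s = u * v * w * x + u * v * w * y + u * v * x * y + u * w * x * y + v * w * x * y
    & t = - (u * v * w * x * y)].
Proof. by rewrite prodXsubC5 => /quintic_inj. Qed.

Lemma L1_double_root p q r s t u v w x :
  quintic p q r s t = ('X - u%:P) * ('X - u%:P) * ('X - v%:P) * ('X - w%:P) * ('X - x%:P) ->
  L1 p q r s t = 2 * ((u - v) * (u - w) * (u - x) * (v - w) * (v - x) * (w - x)) ^+ 2.
Proof. by case/quintic_vieta=> -> -> -> -> ->; rewrite /L1; ring. Qed.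

Lemma D2_triple_root p q r s t u w x :
  quintic p q r s t = ('X - u%:P) * ('X - u%:P) * ('X - u%:P) * ('X - w%:P) * ('X - x%:P) ->
  D2 p q r s t = 0.
Proof. by case/quintic_vieta=> -> -> -> -> ->; rewrite /D2; ring. Qed.

Lemma two_double_roots_invariants p q r s t a b y :
  quintic p q r s t = ('X - a%:P) * ('X - a%:P) * ('X - b%:P) * ('X - b%:P) * ('X - y%:P) ->
  [/\ L2 p q r s t = 4 * ((a - b) * (a - y) * (b - y)) ^+ 2,
      4 * D2 p q r s t = L2 p q r s t ^+ 2 * (a - b) ^+ 2,
      C3 p q r s t = y * L2 p q r s t,
      2 * C21 p q r s t = (a + b) * L2 p q r s t
    & C20 p q r s t = a * b * L2 p q r s t].
Proof.
case/quintic_vieta=> -> -> -> -> ->.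
by rewrite /L2 /D2 /C3 /C21 /C20; split; ring.
Qed.
End RootIdentities.

Lemma discr_roots_eq0 {R : idomainType} (alpha : 'I_5 -> R) :
  discr_roots alpha = 0 ->
  exists m n : nat, [/\ (n < 5)%N, (m < n)%N & alpha (inord m) = alpha (inord n)].
Proof.
rewrite /discr_roots => /eqP; rewrite prodf_seq_eq0 => /hasP [i _ /andP [_]].
rewrite prodf_seq_eq0 => /hasP [j _ /andP [ij]].
by rewrite expf_eq0 subr_eq0 => /andP [_ /eqP e]; exists i, j; rewrite !inord_val.
Qed.

Lemma big_ord5 {R : nzRingType} (F : 'I_5 -> R) :
  \prod_(i < 5) F i = F (inord 0) * F (inord 1) * F (inord 2) * F (inord 3) * F (inord 4).
Proof.
rewrite !big_ord_recr big_ord0 /= mul1r.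
by do !congr (_ * _); congr F; apply: val_inj; rewrite /= inordK.
Qed.

Lemma quintic_double_root {R : idomainType} (p q r s t : R) (alpha : 'I_5 -> R) :
  quintic p q r s t = \prod_(i < 5) ('X - (alpha i)%:P) -> discr_roots alpha = 0 ->
  exists u v w x : R,
    quintic p q r s t = ('X - u%:P) * ('X - u%:P) * ('X - v%:P) * ('X - w%:P) * ('X - x%:P).
Proof.
rewrite big_ord5 => hf /discr_roots_eq0 [m [n [n5 mn]]].
case: n n5 mn => [|[|[|[|[|n]]]]] //; case: m => [|[|[|[|m]]]] // _ _;
  move: (alpha (inord 0)) (alpha (inord 1)) (alpha (inord 2)) (alpha (inord 3))
        (alpha (inord 4)) hf => a0 a1 a2 a3 a4 -> <-.
- by exists a0, a2, a3, a4; ring.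
- by exists a0, a1, a3, a4; ring.
- by exists a1, a0, a3, a4; ring.
- by exists a0, a1, a2, a4; ring.
- by exists a1, a0, a2, a4; ring.
- by exists a2, a0, a1, a4; ring.
- by exists a0, a1, a2, a3; ring.
- by exists a1, a0, a2, a3; ring.
- by exists a2, a0, a1, a3; ring.
- by exists a3, a0, a1, a2; ring.
Qed.

Lemma quintic_two_double_roots {R : numDomainType} (p q r s t u v w x : R) :
  quintic p q r s t = ('X - u%:P) * ('X - u%:P) * ('X - v%:P) * ('X - w%:P) * ('X - x%:P) ->
  L1 p q r s t = 0 -> D2 p q r s t != 0 ->
  exists a b y : R,
    quintic p q r s t = ('X - a%:P) * ('X - a%:P) * ('X - b%:P) * ('X - b%:P) * ('X - y%:P).
Proof.
move=> hf; rewrite (L1_double_root hf) => /eqP hL1 hD2.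
have no_triple u' w' x' : quintic p q r s t =
    ('X - u'%:P) * ('X - u'%:P) * ('X - u'%:P) * ('X - w'%:P) * ('X - x'%:P) -> False.
  by move/D2_triple_root/eqP; rewrite (negPf hD2).
move: hL1; rewrite mulf_eq0 pnatr_eq0 expf_eq0 /= !mulf_eq0 !subr_eq0.
case/orP=> [/orP [/orP [/orP [/orP [|]|]|]|]|] /eqP e; rewrite -e in hf.
- by case: (no_triple u w x).
- by case: (no_triple u v x); rewrite hf; ring.
- by case: (no_triple u v w); rewrite hf; ring.
- by exists u, v, x.
- by exists u, v, w; rewrite hf; ring.
- by exists u, w, v; rewrite hf; ring.
Qed.

Lemma real_root_position {R : numDomainType} (a b x : R) :
  a \is Num.real -> b \is Num.real -> x \is Num.real -> a < b -> x != a -> x != b ->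
  ((0 < (x - a) * (x - b) /\ 2 * x - (a + b) < 0) -> x < a) /\
  ((x - a) * (x - b) < 0 -> a < x /\ x < b) /\
  ((0 < (x - a) * (x - b) /\ 0 < 2 * x - (a + b)) -> b < x).
Proof.
move=> ar br xr ab xa xb; rewrite mulr_natl mulr2n.
have [xa'|ax|/eqP] := real_ltgtP xr ar; last by rewrite (negPf xa).
  have xb' := lt_trans xa' ab.
  have P : 0 < (x - a) * (x - b) by rewrite nmulr_rgt0 ?subr_lt0.
  have S : x + x - (a + b) < 0 by rewrite subr_lt0 ltrD.
  by split=> [//|]; split; [rewrite (lt_gtF P) | case=> _; rewrite (lt_gtF S)].
have [xb'|bx|/eqP] := real_ltgtP xr br; last by rewrite (negPf xb).
  have N : (x - a) * (x - b) < 0 by rewrite pmulr_rlt0 ?subr_lt0 ?subr_gt0.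
  by split; [case; rewrite (lt_gtF N) | split=> [//|]; case; rewrite (lt_gtF N)].
have ax' := lt_trans ab bx.
have P : 0 < (x - a) * (x - b) by rewrite mulr_gt0 ?subr_gt0.
have S : 0 < x + x - (a + b) by rewrite subr_gt0 ltrD.
by split; [case=> _; rewrite (lt_gtF S) | split=> [|//]; rewrite (lt_gtF P)].
Qed.

Section RealCoefficients.
Variable C : numClosedFieldType.
Variables p q r s t : C.
Hypotheses (hp : p \is Num.real) (hq : q \is Num.real) (hr : r \is Num.real)
  (hs : s \is Num.real) (ht : t \is Num.real).

Ltac solve_real :=
  repeat first [ done | apply: realD | apply: realB | apply: realM | apply: realX
               | rewrite realN | apply: realn ].

Lemma L2_real : L2 p q r s t \is Num.real. Proof. by rewrite /L2; solve_real. Qed.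
Lemma C3_real : C3 p q r s t \is Num.real. Proof. by rewrite /C3; solve_real. Qed.
Lemma C21_real : C21 p q r s t \is Num.real. Proof. by rewrite /C21; solve_real. Qed.

Lemma two_double_roots_real (a b y : C) :
  quintic p q r s t = ('X - a%:P) * ('X - a%:P) * ('X - b%:P) * ('X - b%:P) * ('X - y%:P) ->
  L2 p q r s t != 0 -> 0 < D2 p q r s t ->
  [/\ a \is Num.real, b \is Num.real & y \is Num.real] /\ [/\ a != b, y != a & y != b].
Proof.
move=> hf hL2 hD2; have [hL2e hD2e h3 h21 _] := two_double_roots_invariants hf.
have yR : y \is Num.real by rewrite -(mulfK hL2 y) -h3 rpred_div ?C3_real ?L2_real.
have sumR : a + b \is Num.real.
  by rewrite -(mulfK hL2 (a + b)) -h21 rpred_div ?rpredM ?rpred_nat ?C21_real ?L2_real.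
have diffR : a - b \is Num.real.
  suff : 0 < (a - b) ^+ 2 by rewrite realEsqr => /ltW.
  have L2sq : 0 < L2 p q r s t ^+ 2 by rewrite real_exprn_even_gt0 ?L2_real ?hL2 ?orbT.
  have -> : (a - b) ^+ 2 = 4 * D2 p q r s t / L2 p q r s t ^+ 2.
    by rewrite hD2e [_ * (a - b) ^+ 2]mulrC mulfK // gt_eqF.
  by rewrite divr_gt0 // mulr_gt0 ?ltr0n.
have aR : a \is Num.real.
  have -> : a = ((a + b) + (a - b)) / 2 by field.
  by apply: rpred_div; [apply: realD | apply: realn].
have bR : b \is Num.real.
  have -> : b = ((a + b) - (a - b)) / 2 by field.
  by apply: rpred_div; [apply: realB | apply: realn].
have : (a - b) * (a - y) * (b - y) != 0.
  by apply: contraNneq hL2 => e; rewrite hL2e e expr0n mulr0.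
rewrite !mulf_eq0 !negb_or !subr_eq0 => /andP [/andP [ab ay] nby].
by split; split; rewrite // eq_sym.
Qed.

Lemma sorted_two_double_roots (a0 b0 y : C) :
  quintic p q r s t = ('X - a0%:P) * ('X - a0%:P) * ('X - b0%:P) * ('X - b0%:P) * ('X - y%:P) ->
  L2 p q r s t != 0 -> 0 < D2 p q r s t ->
  exists a b : C,
    [/\ a \is Num.real, b \is Num.real, y \is Num.real, a < b & y != a /\ y != b] /\
    quintic p q r s t = ('X - a%:P) * ('X - a%:P) * ('X - b%:P) * ('X - b%:P) * ('X - y%:P).
Proof.
move=> hf hL2 hD2; have [[aR bR yR] [ab ya yb]] := two_double_roots_real hf hL2 hD2.
move: ab; rewrite real_neqr_lt // => /orP [ab|ba]; first by exists a0, b0.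
by exists b0, a0; split=> //; rewrite hf; ring.
Qed.
End RealCoefficients.

Unset Implicit Arguments.
Theorem mainTheorem11 (C : numClosedFieldType) (p q r s t : C)
  (hp : p \is Num.real) (hq : q \is Num.real) (hr : r \is Num.real)
  (hs : s \is Num.real) (ht : t \is Num.real)
  (alpha : 'I_5 -> C)
  (halpha : quintic p q r s t = \prod_(i < 5) ('X - (alpha i)%:P))
  (hD : discr_roots alpha = 0)
  (hL1 : L1 p q r s t = 0)
  (hL2 : L2 p q r s t != 0)
  (hD2 : 0 < D2 p q r s t) :
  let c := C3 p q r s t / L2 p q r s t in
  let F4 := (C3 p q r s t) ^+ 2 / (L2 p q r s t) ^+ 2 + C20 p q r s t / L2 p q r s t
            - 2 * C3 p q r s t * C21 p q r s t / (L2 p q r s t) ^+ 2 in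
  let F5 := (2 * C3 p q r s t - 2 * C21 p q r s t) / L2 p q r s t in
  exists a b : C,
    [/\ a \is Num.real, b \is Num.real, a < b, c != a & c != b] /\
    quintic p q r s t = ('X - c%:P) * ('X - a%:P) ^+ 2 * ('X - b%:P) ^+ 2 /\
    (L2 p q r s t) *: 'X^2 - (2 * C21 p q r s t) *: 'X + (C20 p q r s t)%:P
      = (L2 p q r s t) *: (('X - a%:P) * ('X - b%:P)) /\
    ((0 < F4 /\ F5 < 0) -> c < a) /\
    (F4 < 0 -> a < c /\ c < b) /\
    ((0 < F4 /\ 0 < F5) -> b < c).
Proof.
move=> c F4 F5.
have [u [v [w [x hf]]]] := quintic_double_root halpha hD.
have [a0 [b0 [y hf2]]] := quintic_two_double_roots hf hL1 (lt0r_neq0 hD2).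
have [a [b [[aR bR yR ab [ya yb]] {}hf]]] :=
  sorted_two_double_roots hp hq hr hs ht hf2 hL2 hD2.
have [_ _ h3 h21 h20] := two_double_roots_invariants hf.
have -> : c = y by rewrite /c h3 mulfK.
have h21' : C21 p q r s t = (a + b) * L2 p q r s t / 2.
  by rewrite -h21 mulrC mulKf // pnatr_eq0.
have -> : F4 = (y - a) * (y - b) by rewrite /F4 h3 h21' h20; field.
have -> : F5 = 2 * y - (a + b) by rewrite /F5 h3 h21'; field.
exists a, b; split; first by [].
split; first by rewrite hf; ring.
split; first by rewrite h21 h20 -!mul_polyC !(polyCM, polyCD); ring.
exact: real_root_position.
Qed.
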